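(* Let $a>1/e$ be a real number. Then, as $t\to+\infty$, $$f(t,a)\sim\left(\frac{2\pi t}{ea}\right)^{1/2}\exp\frac{t}{ea},$$ where $f(t,a)=t\int_{0}^{1}(ax)^{-tx}\,dx$.
   Context: For real $a>0$ and real $t$, $f(t,a)=t\int_0^1 (ax)^{-tx}\,dx$, where $(ax)^{-tx}=\exp(-tx\ln(ax))$ for $x\in(0,1]$ (value $1$ at $x=0$). The notation $g\sim h$ means $g/h\to 1$. *)

From Stdlib Require Import Reals.
From Coquelicot Require Import Coquelicot.
Open Scope R_scope.

(* (a x)^(-t x) = exp(-t x ln(a x)) for x in (0,1]; at x = 0 the exponent
   is -t*0*ln(0) = 0, so the value is 1, matching the paper's convention. *)
Definition integrand (t a x : R) : R := exp (- (t * x * ln (a * x))).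

Definition f_ta (t a : R) : R := t * RInt (fun x => integrand t a x) 0 1.

Definition g_ta (t a : R) : R :=
  sqrt (2 * PI * t / (exp 1 * a)) * exp (t / (exp 1 * a)).

(* Write (a x)^(-t x) = exp (t c) * exp (- t psi x) with c = 1 / (e a) and
   psi x = x ln (a x) + c.  As psi' x = ln (a x) + 1 and psi'' x = 1 / x >= 1 on (0, 1),
   psi is convex with minimum psi c = 0 at c, and c lies in (0, 1) because a > 1 / e.
   Laplace's method then gives sqrt t * int_0^1 exp (- t psi) -> sqrt (2 pi / psi'' c),
   which is sqrt (2 pi c): near c, Taylor's formula squeezes psi between quadratics whose
   curvatures are close to psi'' c, and their integrals are Gaussian integrals, known from
   int_0^oo exp (- w^2) = sqrt pi / 2; away from c, psi is bounded below by a positive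
   constant, so that part of the integral is exponentially small. *)

From Stdlib Require Import Reals Lra Psatz.
From Coquelicot Require Import Coquelicot.
Open Scope R_scope.

Lemma exp_le x y : x <= y -> exp x <= exp y.
Proof. intros [H | ->]; [now apply Rlt_le, exp_increasing | apply Rle_refl]. Qed.

(** * The Gaussian integral *)

Definition gauss (w : R) : R := exp (- (w * w)).

Definition gauss_int (x : R) : R := RInt gauss 0 x.

Definition gauss_aux_integrand (x s : R) : R := exp (- (x * x) * (1 + s * s)) / (1 + s * s).

(* [gauss_int x ^ 2 + gauss_aux x] does not depend on [x]; at [x = 0] it is
   [int_0^1 ds / (1 + s^2) = PI / 4], and [gauss_aux] vanishes at infinity. *)
Definition gauss_aux (x : R) : R := RInt (gauss_aux_integrand x) 0 1.

Lemma continuous_gauss x : continuous gauss x.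
Proof. apply (ex_derive_continuous (V := R_NormedModule)); unfold gauss; auto_derive; auto. Qed.

Lemma ex_RInt_gauss a b : ex_RInt gauss a b.
Proof.
  apply (ex_RInt_continuous (V := R_CompleteNormedModule)); intros; apply continuous_gauss.
Qed.

Lemma is_derive_gauss_int x : is_derive gauss_int x (gauss x).
Proof.
  apply (is_derive_RInt gauss gauss_int 0 x).
  - apply filter_forall; intros y.
    apply (RInt_correct (V := R_CompleteNormedModule)), ex_RInt_gauss.
  - apply continuous_gauss.
Qed.

Lemma is_derive_gauss_aux_integrand x s :
  is_derive (fun y => gauss_aux_integrand y s) x (- 2 * x * exp (- (x * x) * (1 + s * s))).
Proof. unfold gauss_aux_integrand; auto_derive; [nra | field; nra]. Qed.

Lemma continuity_2d_pt_Derive_gauss_aux_integrand x s :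
  continuity_2d_pt (fun u v => Derive (fun y => gauss_aux_integrand y v) u) x s.
Proof.
  apply continuity_2d_pt_ext with (fun u v => - 2 * u * exp (- (u * u) * (1 + v * v))).
  { intros u v; symmetry; apply is_derive_unique, is_derive_gauss_aux_integrand. }
  apply continuity_2d_pt_mult.
  { apply continuity_2d_pt_mult; [apply continuity_2d_pt_const | apply continuity_2d_pt_id1]. }
  apply continuity_1d_2d_pt_comp with (f := exp) (g := fun u v => - (u * u) * (1 + v * v)).
  { apply derivable_continuous_pt, derivable_pt_exp. }
  apply continuity_2d_pt_mult.
  - apply continuity_2d_pt_opp, continuity_2d_pt_mult; apply continuity_2d_pt_id1.
  - apply continuity_2d_pt_plus; [apply continuity_2d_pt_const |].
    apply continuity_2d_pt_mult; apply continuity_2d_pt_id2.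
Qed.

Lemma ex_RInt_gauss_aux_integrand x a b : ex_RInt (gauss_aux_integrand x) a b.
Proof.
  apply (ex_RInt_continuous (V := R_CompleteNormedModule)); intros s _.
  apply (ex_derive_continuous (V := R_NormedModule)); unfold gauss_aux_integrand.
  auto_derive; nra.
Qed.

Lemma is_derive_gauss_aux x : is_derive gauss_aux x (- 2 * gauss x * gauss_int x).
Proof.
  unfold gauss_aux.
  replace (- 2 * gauss x * gauss_int x)
    with (RInt (fun s => Derive (fun y => gauss_aux_integrand y s) x) 0 1).
  { apply is_derive_RInt_param.
    - apply filter_forall; intros y s _; eexists; apply is_derive_gauss_aux_integrand.
    - intros s _; apply continuity_2d_pt_Derive_gauss_aux_integrand.
    - apply filter_forall; intros y; apply ex_RInt_gauss_aux_integrand. }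
  (* substitute [w = x s] *)
  rewrite (RInt_ext _ (fun s => scal (- 2 * gauss x) (scal x (gauss (x * s + 0))))).
  - rewrite (RInt_scal (V := R_CompleteNormedModule)).
    rewrite (RInt_comp_lin (V := R_CompleteNormedModule)).
    + rewrite Rmult_0_r, Rmult_1_r, !Rplus_0_r; reflexivity.
    + apply ex_RInt_gauss.
    + apply ex_RInt_continuous; intros s _.
      apply (ex_derive_continuous (V := R_NormedModule)).
      unfold gauss, scal; simpl; unfold mult; simpl; auto_derive; auto.
  - intros s _.
    transitivity (- 2 * x * exp (- (x * x) * (1 + s * s)));
      [apply is_derive_unique, is_derive_gauss_aux_integrand |].
    unfold scal; simpl; unfold mult; simpl; unfold gauss.
    replace (- (x * x) * (1 + s * s)) with (- (x * x) + - ((x * s + 0) * (x * s + 0))) by ring.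
    rewrite exp_plus; ring.
Qed.

Lemma is_derive_0_constant (h : R -> R) :
  (forall x, is_derive h x 0) -> forall x y, h x = h y.
Proof.
  intros Hh.
  assert (Hlt : forall x y, x < y -> h x = h y).
  { intros x y Hxy.
    destruct (MVT_cor2 h (fun _ => 0) x y Hxy) as [z [Hz _]].
    { intros; apply is_derive_Reals, Hh. }
    lra. }
  intros x y; destruct (Rtotal_order x y) as [H | [-> | H]]; auto.
  symmetry; auto.
Qed.

Lemma gauss_aux_0 : gauss_aux 0 = PI / 4.
Proof.
  unfold gauss_aux; rewrite (RInt_ext _ (fun s => / (1 + s ^ 2))).
  - rewrite (is_RInt_unique _ 0 1 (atan 1 - atan 0)).
    { rewrite atan_1, atan_0; simpl; ring. }
    apply (is_RInt_derive atan).
    + intros; apply is_derive_Reals, derivable_pt_lim_atan.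
    + intros; apply (ex_derive_continuous (V := R_NormedModule)); auto_derive; nra.
  - intros s _; unfold gauss_aux_integrand.
    replace (- (0 * 0) * (1 + s * s)) with 0 by ring; rewrite exp_0; simpl; field; nra.
Qed.

Lemma gauss_int_sqr_add_aux x : gauss_int x * gauss_int x + gauss_aux x = PI / 4.
Proof.
  assert (Hd : forall y, is_derive (fun y => gauss_int y * gauss_int y + gauss_aux y) y 0).
  { intros y.
    replace 0 with (gauss y * gauss_int y + gauss_int y * gauss y + (- 2 * gauss y * gauss_int y))
      by ring.
    apply (is_derive_plus (V := R_NormedModule)); [| apply is_derive_gauss_aux].
    apply (is_derive_mult (K := R_AbsRing)); try apply is_derive_gauss_int.
    intros; unfold mult; simpl; ring. }
  rewrite (is_derive_0_constant _ Hd x 0), gauss_aux_0.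
  unfold gauss_int; rewrite RInt_point; change (0 * 0 + PI / 4 = PI / 4); ring.
Qed.

Lemma gauss_aux_bounds x : 0 <= gauss_aux x <= gauss x.
Proof.
  unfold gauss_aux; split.
  - apply RInt_ge_0; [lra | apply ex_RInt_gauss_aux_integrand |].
    intros s _; apply Rlt_le, Rdiv_lt_0_compat; [apply exp_pos | nra].
  - replace (gauss x) with (RInt (fun _ => gauss x) 0 1)
      by (rewrite RInt_const; change ((1 - 0) * gauss x = gauss x); ring).
    apply RInt_le; [lra | apply ex_RInt_gauss_aux_integrand | apply ex_RInt_const |].
    intros s _; unfold gauss_aux_integrand, gauss.
    assert (exp (- (x * x) * (1 + s * s)) <= exp (- (x * x))) by (apply exp_le; nra).
    pose proof (exp_pos (- (x * x) * (1 + s * s))).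
    apply Rle_trans with (exp (- (x * x) * (1 + s * s))); [| assumption].
    apply Rmult_le_reg_r with (1 + s * s); [nra |].
    unfold Rdiv; rewrite Rmult_assoc, Rinv_l by nra; nra.
Qed.

Lemma is_lim_gauss : is_lim gauss p_infty 0.
Proof.
  apply (is_lim_comp exp (fun x => - (x * x)) p_infty 0 m_infty);
    [apply is_lim_exp_m | | now exists 0].
  apply is_lim_le_m_loc with (fun x => - x).
  - exists 1; intros x Hx; nra.
  - apply (is_lim_opp (fun x => x) p_infty p_infty), is_lim_id.
Qed.

Lemma gauss_int_ge0 x : 0 <= x -> 0 <= gauss_int x.
Proof. intros; apply RInt_ge_0; auto; [apply ex_RInt_gauss | intros; apply Rlt_le, exp_pos]. Qed.

Lemma is_lim_gauss_int : is_lim gauss_int p_infty (sqrt PI / 2).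
Proof.
  pose proof PI_RGT_0.
  assert (Hsq : is_lim (fun x => gauss_int x * gauss_int x) p_infty (PI / 4)).
  { apply is_lim_le_le_loc with (fun x => PI / 4 - gauss x) (fun _ => PI / 4).
    - exists 0; intros x _.
      pose proof (gauss_int_sqr_add_aux x); pose proof (gauss_aux_bounds x); lra.
    - replace (Finite (PI / 4)) with (Rbar_minus (PI / 4) 0) by (simpl; f_equal; ring).
      apply (is_lim_minus _ _ _ (PI / 4) 0);
        [apply is_lim_const | apply is_lim_gauss | reflexivity].
    - apply is_lim_const. }
  replace (sqrt PI / 2) with (sqrt (PI / 4)).
  - apply is_lim_ext_loc with (fun x => sqrt (gauss_int x * gauss_int x)).
    + exists 0; intros x Hx; apply sqrt_square, gauss_int_ge0; lra.
    + apply is_lim_comp_continuous; [exact Hsq |].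
      apply (ex_derive_continuous (V := R_NormedModule)); auto_derive; lra.
  - rewrite sqrt_div_alt by lra; replace 4 with (2 * 2) by ring.
    rewrite sqrt_square; lra.
Qed.

Lemma gauss_int_opp x : gauss_int (- x) = - gauss_int x.
Proof.
  unfold gauss_int.
  assert (E := RInt_comp_lin gauss (-1) 0 0 x (ex_RInt_gauss _ _)).
  replace (-1 * 0 + 0) with 0 in E by ring; replace (-1 * x + 0) with (- x) in E by ring.
  rewrite <- E, (RInt_ext _ (fun y => scal (-1) (gauss y))).
  - rewrite (RInt_scal (V := R_CompleteNormedModule)) by apply ex_RInt_gauss.
    change (-1 * RInt gauss 0 x = - RInt gauss 0 x); ring.
  - intros y _; unfold gauss; simpl; f_equal; f_equal; f_equal; ring.
Qed.

Lemma RInt_gauss_sym A : RInt gauss (- A) A = 2 * gauss_int A.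
Proof.
  rewrite <- (RInt_Chasles gauss (- A) 0 A) by apply ex_RInt_gauss.
  rewrite <- (opp_RInt_swap gauss 0 (- A)) by apply ex_RInt_gauss.
  fold (gauss_int (- A)) (gauss_int A); rewrite gauss_int_opp.
  change (- - gauss_int A + gauss_int A = 2 * gauss_int A); ring.
Qed.

Lemma RInt_scaled_gauss t k c d : 0 < t -> 0 < k ->
  sqrt t * RInt (fun x => exp (- (t * k * (x - c) ^ 2 / 2))) (c - d) (c + d)
  = 2 / sqrt (k / 2) * gauss_int (sqrt (k / 2) * d * sqrt t).
Proof.
  intros Ht Hk.
  set (u := sqrt (k / 2)); set (s := sqrt t * u).
  assert (Hu : 0 < u) by (apply sqrt_lt_R0; lra).
  assert (Hs : 0 < s) by (apply Rmult_lt_0_compat; [apply sqrt_lt_R0 |]; lra).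
  assert (Hs2 : s * s = t * k / 2).
  { unfold s, u; rewrite <- sqrt_mult_alt by lra; rewrite sqrt_sqrt; [field | nra]. }
  (* substitute [x = c + y / s] *)
  assert (E := RInt_comp_lin
                 (fun x => exp (- (t * k * (x - c) ^ 2 / 2))) (/ s) c (- (s * d)) (s * d)).
  replace (/ s * - (s * d) + c) with (c - d) in E by (field; lra).
  replace (/ s * (s * d) + c) with (c + d) in E by (field; lra).
  rewrite <- E, (RInt_ext _ (fun y => scal (/ s) (gauss y))).
  - rewrite (RInt_scal (V := R_CompleteNormedModule)), RInt_gauss_sym by apply ex_RInt_gauss.
    change (sqrt t * (/ s * (2 * gauss_int (s * d))) = 2 / u * gauss_int (u * d * sqrt t)).
    replace (u * d * sqrt t) with (s * d) by (unfold s; ring).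
    pose proof (sqrt_lt_R0 t Ht); unfold s; field; repeat split; nra.
  - intros y _; unfold gauss; simpl; unfold mult; simpl; do 3 f_equal.
    replace (t * k) with (2 * (s * s)) by lra; field; lra.
  - apply ex_RInt_continuous; intros.
    apply (ex_derive_continuous (V := R_NormedModule)); auto_derive; auto.
Qed.

Lemma is_lim_mul_sqrt_p b : 0 < b -> is_lim (fun t => b * sqrt t) p_infty p_infty.
Proof.
  intros Hb; replace p_infty with (Rbar_mult b p_infty) at 2.
  - apply is_lim_scal_l, is_lim_sqrt_p, is_lim_id.
  - simpl; destruct (Rle_dec 0 b) as [H0 | H0]; [| lra].
    destruct (Rle_lt_or_eq_dec 0 b H0); [reflexivity | lra].
Qed.

Lemma is_lim_sqrt_mul_RInt_scaled_gauss k c d : 0 < k -> 0 < d ->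
  is_lim (fun t => sqrt t * RInt (fun x => exp (- (t * k * (x - c) ^ 2 / 2))) (c - d) (c + d))
    p_infty (sqrt (2 * PI / k)).
Proof.
  intros Hk Hd; pose proof PI_RGT_0.
  set (u := sqrt (k / 2)).
  assert (Hu : 0 < u) by (apply sqrt_lt_R0; lra).
  apply is_lim_ext_loc with (fun t => 2 / u * gauss_int (u * d * sqrt t)).
  { exists 0; intros t Ht; symmetry; apply RInt_scaled_gauss; lra. }
  replace (sqrt (2 * PI / k)) with (2 / u * (sqrt PI / 2)).
  - apply (is_lim_scal_l _ (2 / u) p_infty (sqrt PI / 2)).
    apply (is_lim_comp gauss_int (fun t => u * d * sqrt t) p_infty _ p_infty);
      [apply is_lim_gauss_int | | now exists 0].
    apply is_lim_mul_sqrt_p; nra.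
  - replace (2 * PI / k) with (PI / (k / 2)) by (field; lra).
    rewrite sqrt_div_alt by lra; fold u; field; lra.
Qed.

(** * Laplace's method *)

Lemma flat_convex_nonneg (q q1 q2 : R -> R) lo hi c x :
  (forall s, lo <= s <= hi -> is_derive q s (q1 s) /\ is_derive q1 s (q2 s)) ->
  (forall s, lo <= s <= hi -> 0 <= q2 s) ->
  lo <= c <= hi -> lo <= x <= hi -> q c = 0 -> q1 c = 0 -> 0 <= q x.
Proof.
  intros Hd Hq2 Hc Hx q_c q1_c.
  assert (Dq : forall s, lo <= s <= hi -> derivable_pt_lim q s (q1 s))
    by (intros; apply is_derive_Reals, Hd; auto).
  assert (Dq1 : forall s, lo <= s <= hi -> derivable_pt_lim q1 s (q2 s))
    by (intros; apply is_derive_Reals, Hd; auto).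
  destruct (Rtotal_order c x) as [Hcx | [<- | Hxc]]; [| lra |].
  - destruct (MVT_cor2 q q1 c x Hcx) as [y [Ey Hy]]; [intros; apply Dq; lra |].
    destruct (MVT_cor2 q1 q2 c y (proj1 Hy)) as [z [Ez Hz]]; [intros; apply Dq1; lra |].
    assert (0 <= q2 z) by (apply Hq2; lra).
    assert (0 <= q1 y) by nra.
    nra.
  - destruct (MVT_cor2 q q1 x c Hxc) as [y [Ey Hy]]; [intros; apply Dq; lra |].
    destruct (MVT_cor2 q1 q2 y c (proj2 Hy)) as [z [Ez Hz]]; [intros; apply Dq1; lra |].
    assert (0 <= q2 z) by (apply Hq2; lra).
    assert (q1 y <= 0) by nra.
    nra.
Qed.

Lemma quadratic_le_of_second_derivative_ge (F F1 F2 : R -> R) lo hi c x k :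
  (forall s, lo <= s <= hi -> is_derive F s (F1 s) /\ is_derive F1 s (F2 s)) ->
  (forall s, lo <= s <= hi -> k <= F2 s) ->
  lo <= c <= hi -> lo <= x <= hi -> F c = 0 -> F1 c = 0 ->
  k * (x - c) ^ 2 / 2 <= F x.
Proof.
  intros Hd Hk Hc Hx F_c F1_c.
  enough (0 <= F x - k * (x - c) ^ 2 / 2) by lra.
  apply (flat_convex_nonneg (fun s => F s - k * (s - c) ^ 2 / 2)
           (fun s => F1 s - k * (s - c)) (fun s => F2 s - k) lo hi c x); auto.
  - intros s Hs; destruct (Hd s Hs) as [D1 D2]; split.
    + apply (is_derive_minus (V := R_NormedModule)); [exact D1 |].
      auto_derive; [auto | field].
    + apply (is_derive_minus (V := R_NormedModule)); [exact D2 |].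
      auto_derive; [auto | ring].
  - intros s Hs; specialize (Hk s Hs); lra.
  - rewrite F_c, Rminus_diag; field.
  - rewrite F1_c; ring.
Qed.

Lemma le_quadratic_of_second_derivative_le (F F1 F2 : R -> R) lo hi c x k :
  (forall s, lo <= s <= hi -> is_derive F s (F1 s) /\ is_derive F1 s (F2 s)) ->
  (forall s, lo <= s <= hi -> F2 s <= k) ->
  lo <= c <= hi -> lo <= x <= hi -> F c = 0 -> F1 c = 0 ->
  F x <= k * (x - c) ^ 2 / 2.
Proof.
  intros Hd Hk Hc Hx F_c F1_c.
  enough (- k * (x - c) ^ 2 / 2 <= - F x) by lra.
  apply (quadratic_le_of_second_derivative_ge (fun s => - F s) (fun s => - F1 s)
           (fun s => - F2 s) lo hi); auto.
  - intros s Hs; destruct (Hd s Hs) as [D1 D2].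
    split; apply (is_derive_opp (V := R_NormedModule)); assumption.
  - intros s Hs; specialize (Hk s Hs); lra.
  - rewrite F_c; ring.
  - rewrite F1_c; ring.
Qed.

Lemma is_lim_sqrt_mul_exp_neg b : 0 < b -> is_lim (fun t => sqrt t * exp (- (t * b))) p_infty 0.
Proof.
  intros Hb.
  apply is_lim_le_le_loc with (fun _ => 0) (fun t => / (b * sqrt t)).
  - exists 0; intros t Ht.
    pose proof (sqrt_lt_R0 t Ht); pose proof (sqrt_sqrt t (Rlt_le _ _ Ht)).
    pose proof (exp_pos (t * b)); pose proof (exp_ineq1_le (t * b)).
    rewrite exp_Ropp; split.
    { apply Rlt_le, Rmult_lt_0_compat; [assumption | apply Rinv_0_lt_compat; lra]. }
    (* [exp (t b) >= 1 + t b > b sqrt t * sqrt t] *)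
    apply Rmult_le_reg_r with (b * sqrt t * exp (t * b)); [apply Rmult_lt_0_compat; nra |].
    field_simplify; [nra | lra | nra].
  - apply is_lim_const.
  - replace (Finite 0) with (Rbar_inv p_infty) by reflexivity.
    apply is_lim_inv; [| discriminate].
    apply is_lim_mul_sqrt_p, Hb.
Qed.

Lemma continuous_eps_delta (f : R -> R) x (eps : posreal) :
  continuous f x ->
  exists delta : posreal, forall y, Rabs (y - x) < delta -> Rabs (f y - f x) < eps.
Proof.
  intros Hf; destruct (proj1 (filterlim_locally f (f x)) Hf eps) as [delta Hd].
  now exists delta.
Qed.

Section Laplace.

Variables (phi phi1 phi2 : R -> R) (lo hi c m : R).

Hypothesis lo_lt_c : lo < c.
Hypothesis c_lt_hi : c < hi.
Hypothesis continuous_phi : forall x, lo <= x <= hi -> continuous phi x.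
Hypothesis is_derive_phi :
  forall x, lo < x < hi -> is_derive phi x (phi1 x) /\ is_derive phi1 x (phi2 x).
Hypothesis m_pos : 0 < m.
Hypothesis m_le_phi2 : forall x, lo < x < hi -> m <= phi2 x.
Hypothesis continuous_phi2 : continuous phi2 c.
Hypothesis phi_c : phi c = 0.
Hypothesis phi1_c : phi1 c = 0.

Lemma ex_RInt_exp_phi t u v :
  lo <= u -> u <= v -> v <= hi -> ex_RInt (fun x => exp (- (t * phi x))) u v.
Proof.
  intros Hu Huv Hv; apply (ex_RInt_continuous (V := R_CompleteNormedModule)).
  rewrite Rmin_left, Rmax_right by lra; intros x Hx.
  apply (continuous_comp (fun x => - (t * phi x)) exp).
  - apply (continuous_opp (fun x => t * phi x)), (continuous_scal_r t phi), continuous_phi; lra.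
  - apply (ex_derive_continuous (V := R_NormedModule)); auto_derive; auto.
Qed.

Lemma quadratic_le_phi x : lo < x < hi -> m * (x - c) ^ 2 / 2 <= phi x.
Proof.
  intros Hx.
  pose proof (Rmin_l x c); pose proof (Rmin_r x c).
  pose proof (Rmax_l x c); pose proof (Rmax_r x c).
  assert (lo < Rmin x c) by (apply Rmin_glb_lt; lra).
  assert (Rmax x c < hi) by (apply Rmax_lub_lt; lra).
  apply (quadratic_le_of_second_derivative_ge phi phi1 phi2 (Rmin x c) (Rmax x c)); auto;
    try (intros s Hs; apply is_derive_phi || apply m_le_phi2; lra); lra.
Qed.

Lemma phi_near_c_bounds d kl ku x :
  lo < c - d -> c + d < hi -> (forall s, c - d <= s <= c + d -> kl <= phi2 s <= ku) ->
  c - d <= x <= c + d -> kl * (x - c) ^ 2 / 2 <= phi x <= ku * (x - c) ^ 2 / 2.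
Proof.
  intros Hlo Hhi Hk Hx.
  assert (Hd : forall s, c - d <= s <= c + d ->
                 is_derive phi s (phi1 s) /\ is_derive phi1 s (phi2 s))
    by (intros; apply is_derive_phi; lra).
  split.
  - apply (quadratic_le_of_second_derivative_ge phi phi1 phi2 (c - d) (c + d)); auto;
      [intros s Hs; apply Hk; auto | lra].
  - apply (le_quadratic_of_second_derivative_le phi phi1 phi2 (c - d) (c + d)); auto;
      [intros s Hs; apply Hk; auto | lra].
Qed.

Lemma RInt_exp_phi_far_le t d u v :
  0 <= t -> 0 <= d -> lo <= u -> u <= v -> v <= hi ->
  (forall x, u < x < v -> d <= Rabs (x - c)) ->
  RInt (fun x => exp (- (t * phi x))) u v <= (v - u) * exp (- (t * (m * d * d / 2))).
Proof.
  intros Ht Hd Hu Huv Hv Hfar.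
  replace ((v - u) * exp (- (t * (m * d * d / 2))))
    with (RInt (fun _ => exp (- (t * (m * d * d / 2)))) u v)
    by (rewrite RInt_const; reflexivity).
  apply RInt_le; [lra | apply ex_RInt_exp_phi; lra | apply ex_RInt_const |].
  intros x Hx; apply exp_le, Ropp_le_contravar, Rmult_le_compat_l; [lra |].
  specialize (Hfar x Hx); pose proof (quadratic_le_phi x ltac:(lra)).
  assert (d * d <= (x - c) ^ 2) by (rewrite <- pow2_abs; nra).
  nra.
Qed.

Lemma RInt_exp_phi_bounds t d kl ku :
  0 <= t -> 0 < d -> lo < c - d -> c + d < hi ->
  (forall s, c - d <= s <= c + d -> kl <= phi2 s <= ku) ->
  RInt (fun x => exp (- (t * ku * (x - c) ^ 2 / 2))) (c - d) (c + d)
    <= RInt (fun x => exp (- (t * phi x))) lo hi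
  /\ RInt (fun x => exp (- (t * phi x))) lo hi
    <= RInt (fun x => exp (- (t * kl * (x - c) ^ 2 / 2))) (c - d) (c + d)
       + (hi - lo) * exp (- (t * (m * d * d / 2))).
Proof.
  intros Ht Hd Hlo Hhi Hk.
  set (I u v := RInt (fun x => exp (- (t * phi x))) u v).
  assert (Hsplit : I lo hi = I lo (c - d) + I (c - d) (c + d) + I (c + d) hi).
  { unfold I; rewrite !(RInt_Chasles (V := R_CompleteNormedModule)); auto;
      apply ex_RInt_exp_phi; lra. }
  assert (Hgauss : forall k, ex_RInt (fun x => exp (- (t * k * (x - c) ^ 2 / 2))) (c - d) (c + d)).
  { intros k; apply (ex_RInt_continuous (V := R_CompleteNormedModule)); intros.
    apply (ex_derive_continuous (V := R_NormedModule)); auto_derive; auto. }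
  assert (Hnonneg : forall u v, lo <= u -> u <= v -> v <= hi -> 0 <= I u v).
  { intros u v Hu Huv Hv; apply RInt_ge_0; [lra | apply ex_RInt_exp_phi; lra |].
    intros; apply Rlt_le, exp_pos. }
  assert (Hmid_lo : RInt (fun x => exp (- (t * ku * (x - c) ^ 2 / 2))) (c - d) (c + d)
                    <= I (c - d) (c + d)).
  { apply RInt_le; [lra | apply Hgauss | apply ex_RInt_exp_phi; lra |].
    intros x Hx; apply exp_le.
    destruct (phi_near_c_bounds d kl ku x Hlo Hhi Hk ltac:(lra)); nra. }
  assert (Hmid_hi : I (c - d) (c + d)
                    <= RInt (fun x => exp (- (t * kl * (x - c) ^ 2 / 2))) (c - d) (c + d)).
  { apply RInt_le; [lra | apply ex_RInt_exp_phi; lra | apply Hgauss |].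
    intros x Hx; apply exp_le.
    destruct (phi_near_c_bounds d kl ku x Hlo Hhi Hk ltac:(lra)); nra. }
  assert (Hleft : I lo (c - d) <= (c - d - lo) * exp (- (t * (m * d * d / 2)))).
  { apply RInt_exp_phi_far_le; try lra; intros x Hx; rewrite Rabs_left; lra. }
  assert (Hright : I (c + d) hi <= (hi - (c + d)) * exp (- (t * (m * d * d / 2)))).
  { apply RInt_exp_phi_far_le; try lra; intros x Hx; rewrite Rabs_pos_eq; lra. }
  pose proof (Hnonneg lo (c - d)); pose proof (Hnonneg (c + d) hi).
  pose proof (exp_pos (- (t * (m * d * d / 2)))).
  fold (I lo hi); rewrite Hsplit; split; nra.
Qed.

Lemma phi2_near_c eta : 0 < eta ->
  exists d, 0 < d /\ lo < c - d /\ c + d < hi /\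
    forall s, c - d <= s <= c + d -> phi2 c - eta <= phi2 s <= phi2 c + eta.
Proof.
  intros Heta.
  destruct (continuous_eps_delta phi2 c (mkposreal eta Heta) continuous_phi2)
    as [[delta Hdelta] Hnear].
  simpl in Hnear.
  set (d := Rmin (delta / 2) (Rmin ((c - lo) / 2) ((hi - c) / 2))).
  assert (d <= delta / 2) by apply Rmin_l.
  assert (d <= Rmin ((c - lo) / 2) ((hi - c) / 2)) by apply Rmin_r.
  pose proof (Rmin_l ((c - lo) / 2) ((hi - c) / 2)).
  pose proof (Rmin_r ((c - lo) / 2) ((hi - c) / 2)).
  exists d; split; [repeat apply Rmin_glb_lt; lra |]; split; [lra |]; split; [lra |].
  intros s Hs; assert (Hsc : Rabs (s - c) < delta) by (apply Rabs_def1; lra).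
  specialize (Hnear s Hsc); apply Rabs_def2 in Hnear; lra.
Qed.

Lemma eventually_sqrt_mul_RInt_exp_phi_between d kl ku (eps : posreal) :
  0 < kl -> 0 < d -> lo < c - d -> c + d < hi ->
  (forall s, c - d <= s <= c + d -> kl <= phi2 s <= ku) ->
  Rbar_locally p_infty (fun t =>
    sqrt (2 * PI / ku) - eps < sqrt t * RInt (fun x => exp (- (t * phi x))) lo hi
    < sqrt (2 * PI / kl) + eps).
Proof.
  intros Hkl Hd Hlo Hhi Hk.
  assert (Hku : 0 < ku) by (destruct (Hk c ltac:(lra)); lra).
  assert (Hlower := is_lim_sqrt_mul_RInt_scaled_gauss ku c d Hku Hd).
  assert (Hupper : is_lim (fun t => sqrt t * RInt (fun x => exp (- (t * kl * (x - c) ^ 2 / 2)))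
                                                 (c - d) (c + d)
                                  + (hi - lo) * (sqrt t * exp (- (t * (m * d * d / 2)))))
                   p_infty (sqrt (2 * PI / kl) + (hi - lo) * 0)).
  { apply is_lim_plus'; [apply is_lim_sqrt_mul_RInt_scaled_gauss; lra |].
    apply (is_lim_scal_l _ (hi - lo) p_infty 0), is_lim_sqrt_mul_exp_neg.
    pose proof (Rmult_lt_0_compat _ _ (Rmult_lt_0_compat _ _ m_pos Hd) Hd); lra. }
  apply is_lim_spec in Hlower, Hupper.
  assert (Hpos : Rbar_locally p_infty (fun t => 0 < t)) by (exists 0; auto).
  generalize (filter_and _ _ (filter_and _ _ (Hlower eps) (Hupper eps)) Hpos).
  apply filter_imp; intros t [[Hl Hu] Ht].
  destruct (RInt_exp_phi_bounds t d kl ku ltac:(lra) Hd Hlo Hhi Hk) as [Hge Hle].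
  pose proof (sqrt_pos t) as Hst.
  apply (Rmult_le_compat_l (sqrt t)) in Hge, Hle; auto.
  rewrite Rmult_plus_distr_l, <- (Rmult_assoc (sqrt t) (hi - lo)), (Rmult_comm (sqrt t) (hi - lo)),
    Rmult_assoc in Hle.
  apply Rabs_def2 in Hl, Hu; lra.
Qed.

Theorem is_lim_laplace :
  is_lim (fun t => sqrt t * RInt (fun x => exp (- (t * phi x))) lo hi) p_infty
    (sqrt (2 * PI / phi2 c)).
Proof.
  pose proof PI_RGT_0.
  set (k := phi2 c); set (L kappa := sqrt (2 * PI / kappa)); change (sqrt (2 * PI / k)) with (L k).
  assert (Hk : m <= k) by (apply m_le_phi2; lra).
  apply is_lim_spec; intros eps.
  assert (HL : continuous L k).
  { apply (ex_derive_continuous (V := R_NormedModule)); unfold L; auto_derive.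
    repeat split; try lra; apply Rmult_lt_0_compat, Rinv_0_lt_compat; lra. }
  destruct (continuous_eps_delta L k (pos_div_2 eps) HL) as [[delta Hdelta] HLnear].
  simpl in HLnear.
  set (eta := Rmin (delta / 2) (k / 2)).
  assert (0 < eta) by (apply Rmin_glb_lt; lra).
  assert (eta <= delta / 2) by apply Rmin_l; assert (eta <= k / 2) by apply Rmin_r.
  assert (HLu : Rabs (L (k + eta) - L k) < eps / 2) by (apply HLnear; rewrite Rabs_pos_eq; lra).
  assert (HLl : Rabs (L (k - eta) - L k) < eps / 2) by (apply HLnear; rewrite Rabs_left; lra).
  destruct (phi2_near_c eta) as (d & Hd & Hlo & Hhi & Hnear); [assumption |].
  generalize (eventually_sqrt_mul_RInt_exp_phi_between d (k - eta) (k + eta) (pos_div_2 eps)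
                ltac:(lra) Hd Hlo Hhi Hnear).
  apply filter_imp; intros t Ht; simpl in Ht; fold (L (k + eta)) (L (k - eta)) in Ht.
  apply Rabs_def2 in HLu, HLl; apply Rabs_def1; lra.
Qed.

End Laplace.

(** * The phase [x ln (a x)] *)

Lemma continuous_mul_ln_0 a : 0 < a -> continuous (fun x => x * ln (a * x)) 0.
Proof.
  intros Ha; apply filterlim_locally; intros eps.
  assert (Hea : 0 < eps * a) by (apply Rmult_lt_0_compat; [apply cond_pos | exact Ha]).
  destruct (proj2 (is_lim_spec _ _ _) is_lim_div_ln_p (mkposreal _ Hea)) as [M HM].
  set (M1 := Rmax M 1); assert (1 <= M1) by apply Rmax_r; assert (M <= M1) by apply Rmax_l.
  assert (Hdelta : 0 < / (a * M1)) by (apply Rinv_0_lt_compat; nra).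
  exists (mkposreal _ Hdelta); intros x Hx; change R in x.
  change (Rabs (x - 0) < / (a * M1)) in Hx; rewrite Rminus_0_r in Hx.
  change (Rabs (x * ln (a * x) - 0 * ln (a * 0)) < eps); rewrite Rmult_0_l, Rminus_0_r.
  destruct (Rle_or_lt x 0) as [Hx0 | Hx0].
  - (* Stdlib's [ln] is [0] on nonpositive numbers *)
    unfold ln; destruct (Rlt_dec 0 (a * x)); [exfalso; nra |].
    rewrite Rmult_0_r, Rabs_R0; apply cond_pos.
  - rewrite Rabs_pos_eq in Hx by lra.
    set (y := / (a * x)).
    assert (Hax : 0 < a * x) by nra.
    assert (Hy : M < y).
    { assert (x * (a * M1) < 1).
      { apply (Rmult_lt_compat_r (a * M1)) in Hx; [| nra].
        rewrite Rinv_l in Hx by nra; exact Hx. }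
      unfold y; apply Rle_lt_trans with M1; [assumption |].
      apply Rmult_lt_reg_r with (a * x); [exact Hax |].
      rewrite Rinv_l by lra; nra. }
    specialize (HM y Hy); simpl in HM; rewrite Rminus_0_r in HM.
    replace (x * ln (a * x)) with (- / a * (ln y / y))
      by (unfold y; rewrite ln_Rinv by nra; field; lra).
    rewrite Rabs_mult, Rabs_Ropp, Rabs_pos_eq by (apply Rlt_le, Rinv_0_lt_compat, Ha).
    apply Rmult_lt_reg_l with a; [assumption |].
    rewrite <- Rmult_assoc, Rinv_r, Rmult_1_l by lra; lra.
Qed.

Definition psi (a x : R) : R := x * ln (a * x) + / (exp 1 * a).

Lemma inv_e_mul_bounds a : / exp 1 < a -> 0 < / (exp 1 * a) < 1.
Proof.
  intros Ha; pose proof (exp_pos 1); pose proof (Rinv_0_lt_compat _ (exp_pos 1)).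
  assert (Hea : 1 < exp 1 * a).
  { apply (Rmult_lt_compat_l (exp 1)) in Ha; [| lra]; rewrite Rinv_r in Ha; lra. }
  split; [apply Rinv_0_lt_compat; lra |].
  pose proof (Rinv_1_lt_contravar 1 _ (Rle_refl 1) Hea) as Hinv.
  rewrite Rinv_1 in Hinv; exact Hinv.
Qed.

Lemma ln_mul_inv_e_mul a : 0 < a -> ln (a * / (exp 1 * a)) = -1.
Proof.
  intros Ha; pose proof (exp_pos 1).
  replace (a * / (exp 1 * a)) with (/ exp 1) by (field; lra).
  rewrite ln_Rinv, ln_exp by lra; reflexivity.
Qed.

Lemma psi_inv_e_mul a : 0 < a -> psi a (/ (exp 1 * a)) = 0.
Proof. intros Ha; unfold psi; rewrite ln_mul_inv_e_mul by exact Ha; ring. Qed.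

Lemma continuous_psi a x : 0 < a -> 0 <= x -> continuous (psi a) x.
Proof.
  intros Ha [Hx | <-].
  - apply (ex_derive_continuous (V := R_NormedModule)); unfold psi; auto_derive; nra.
  - apply (continuous_plus (fun x => x * ln (a * x)) (fun _ => / (exp 1 * a))).
    + now apply continuous_mul_ln_0.
    + apply continuous_const.
Qed.

Lemma is_derive_psi a x : 0 < a -> 0 < x ->
  is_derive (psi a) x (ln (a * x) + 1) /\ is_derive (fun x => ln (a * x) + 1) x (/ x).
Proof. intros Ha Hx; split; unfold psi; auto_derive; try nra; field; lra. Qed.

Lemma is_lim_sqrt_mul_RInt_psi a : / exp 1 < a ->
  is_lim (fun t => sqrt t * RInt (fun x => exp (- (t * psi a x))) 0 1) p_infty
    (sqrt (2 * PI * / (exp 1 * a))).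
Proof.
  intros Ha; pose proof (Rinv_0_lt_compat _ (exp_pos 1)).
  assert (Ha0 : 0 < a) by lra.
  destruct (inv_e_mul_bounds a Ha) as [Hc0 Hc1].
  replace (2 * PI * / (exp 1 * a)) with (2 * PI / / / (exp 1 * a))
    by (rewrite Rinv_inv; reflexivity).
  apply (is_lim_laplace (psi a) (fun x => ln (a * x) + 1) Rinv 0 1 (/ (exp 1 * a)) 1); auto.
  - intros x Hx; apply continuous_psi; lra.
  - intros x Hx; apply is_derive_psi; lra.
  - lra.
  - intros x Hx; rewrite <- Rinv_1; apply Rinv_le_contravar; lra.
  - apply (ex_derive_continuous (V := R_NormedModule)); auto_derive; lra.
  - apply psi_inv_e_mul, Ha0.
  - rewrite ln_mul_inv_e_mul by exact Ha0; ring.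
Qed.

Lemma f_ta_div_g_ta t a : 0 < t -> 0 < a ->
  f_ta t a / g_ta t a
  = / sqrt (2 * PI * / (exp 1 * a)) * (sqrt t * RInt (fun x => exp (- (t * psi a x))) 0 1).
Proof.
  intros Ht Ha; pose proof (exp_pos 1); pose proof PI_RGT_0.
  set (c := / (exp 1 * a)).
  assert (Hc : 0 < c) by (apply Rinv_0_lt_compat, Rmult_lt_0_compat; lra).
  unfold f_ta, g_ta.
  rewrite (RInt_ext _ (fun x => scal (exp (t * c)) (exp (- (t * psi a x))))).
  2: { intros x _; unfold integrand, psi, scal; simpl; unfold mult; simpl.
       rewrite <- exp_plus; f_equal; fold c; ring. }
  rewrite (RInt_scal (V := R_CompleteNormedModule)).
  2: { apply (ex_RInt_exp_phi (psi a) 0 1); try lra; intros; apply continuous_psi; lra. }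
  replace (t / (exp 1 * a)) with (t * c) by (unfold c; field; lra).
  replace (2 * PI * t / (exp 1 * a)) with (t * (2 * PI * c)) by (unfold c; field; lra).
  rewrite sqrt_mult_alt by lra.
  pose proof (sqrt_lt_R0 t Ht); pose proof (sqrt_sqrt t (Rlt_le _ _ Ht)) as Hsqrt_t.
  pose proof (sqrt_lt_R0 (2 * PI * c) ltac:(nra)); pose proof (exp_pos (t * c)).
  change (t * (exp (t * c) * RInt (fun x => exp (- (t * psi a x))) 0 1)
          / (sqrt t * sqrt (2 * PI * c) * exp (t * c))
          = / sqrt (2 * PI * c) * (sqrt t * RInt (fun x => exp (- (t * psi a x))) 0 1)).
  rewrite <- Hsqrt_t at 1; field; repeat split; lra.
Qed.

Theorem mainTheorem2 (a : R) (ha : / exp 1 < a) :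
  is_lim (fun t => f_ta t a / g_ta t a) p_infty 1.
Proof.
  assert (Ha : 0 < a) by (pose proof (Rinv_0_lt_compat _ (exp_pos 1)); lra).
  set (L := sqrt (2 * PI * / (exp 1 * a))).
  assert (HL : 0 < L)
    by (apply sqrt_lt_R0; destruct (inv_e_mul_bounds a ha); pose proof PI_RGT_0; nra).
  apply is_lim_ext_loc
    with (fun t => / L * (sqrt t * RInt (fun x => exp (- (t * psi a x))) 0 1)).
  { exists 0; intros t Ht; symmetry; apply f_ta_div_g_ta; assumption. }
  replace (Finite 1) with (Rbar_mult (/ L) L) by (simpl; f_equal; field; lra).
  apply is_lim_scal_l, is_lim_sqrt_mul_RInt_psi, ha.
Qed.
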